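(* Let $G$ be a finitely generated group and fix $S\in\Gamma_n(G)$. Let $\alpha>1$ be a constant and $(k_i)_{i\ge1}$ a log-dense sequence. Suppose that for each $i\ge1$ there is a path $\gamma$ in $\Gamma_n(G)$ of length at most $\alpha k_i$ which starts at $S$ and visits some vertices $S_1,\dots,S_{k_i}\in\Gamma_n(G)$ in that order, and that there is a cubic $k_i$-tuple $(g_1,\dots,g_{k_i})$ with $g_j$ an entry of $S_j$ for each $1\le j\le k_i$. Then $\Gamma_m(G,S)$ has exponential growth for every $m\ge n+1$.
   Context: For a group $G$, a generating $n$-tuple is $(g_1,\dots,g_n)\in G^n$ generating $G$. The product replacement graph $\Gamma_n(G)$ has vertices the generating $n$-tuples, with edges from $(g_1,\dots,g_n)$ to each tuple obtained by replacing $g_j$ by $g_jg_i^{\pm1}$ or $g_i^{\pm1}g_j$, for every ordered pair $i\neq j$. For $S=(g_1,\dots,g_n)$ and $m\ge n$, $\Gamma_m(G,S)$ is the connected component of $\Gamma_m(G)$ containing $(g_1,\dots,g_n,1,\dots,1)$ ($m-n$ identity entries). A connected graph has exponential growth if for some vertex $v$ there is $\alpha>1$ such that the number of vertices at distance at most $r$ from $v$ is at least $\alpha^r$ for all sufficiently large $r$. A sequence of positive integers $(k_i)$ is log-dense if it is increasing and $k_{i+1}\le\beta k_i$ for some constant $\beta$ and all $i$. A tuple $(g_1,\dots,g_k)\in G^k$ is cubic if the set $\{g_1^{\varepsilon_1}g_2^{\varepsilon_2}\cdots g_k^{\varepsilon_k}:\varepsilon_j\in\{0,1\}\}$ has exactly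 $2^k$ elements. *)

From Stdlib Require Import Reals List.
From mathcomp Require Import all_boot.

Set Implicit Arguments.
Unset Strict Implicit.
Unset Printing Implicit Defensive.

Record group := Group {
  carrier :> Type;
  mul : carrier -> carrier -> carrier;
  inv : carrier -> carrier;
  one : carrier;
  mulA : forall x y z, mul x (mul y z) = mul (mul x y) z;
  mul1g : forall x, mul one x = x;
  mulg1 : forall x, mul x one = x;
  mulVg : forall x, mul (inv x) x = one;
  mulgV : forall x, mul x (inv x) = one
}.

Section GroupDefs.
Variable G : group.

Definition subgroup (H : G -> Prop) : Prop :=
  H (one G) /\ (forall x y, H x -> H y -> H (mul x y)) /\ (forall x, H x -> H (inv x)).

Definition tup (n : nat) := 'I_n -> G.

Definition generating (n : nat) (s : tup n) : Prop :=
  forall H : G -> Prop, subgroup H -> (forall c, H (s c)) -> forall x, H x.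

Definition fin_generated : Prop := exists d (s : tup d), generating s.

(* Edges of the product replacement graph: replace g_j by g_j g_i^{+-1} or
   g_i^{+-1} g_j, for i <> j. *)
Definition pr_adj (n : nat) (s t : tup n) : Prop :=
  exists (i j : 'I_n), i <> j /\ exists h : G, (h = s i \/ h = inv (s i)) /\
    (t = (fun c => if c == j then mul (s j) h else s c) \/
     t = (fun c => if c == j then mul h (s j) else s c)).

(* path v :: l in Gamma_n(G): all vertices generating, consecutive ones adjacent;
   its length is size l *)
Fixpoint adj_chain (n : nat) (v : tup n) (l : seq (tup n)) : Prop :=
  match l with
  | [::] => True
  | w :: l' => pr_adj v w /\ adj_chain w l'
  end.

Definition pr_path (n : nat) (v : tup n) (l : seq (tup n)) : Prop :=
  generating v /\ (forall w, List.In w l -> generating w) /\ adj_chain v l.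

Definition dist_le (n : nat) (v w : tup n) (r : nat) : Prop :=
  exists l, size l <= r /\ pr_path v l /\ last v l = w.

(* (g_1, ..., g_n, 1, ..., 1) in G^m *)
Definition pad (n m : nat) (s : tup n) : tup m :=
  fun c => match @insub nat (fun x => x < n) _ (val c) with
           | Some c' => s c'
           | None => one G
           end.

Definition component (m : nat) (v0 : tup m) (w : tup m) : Prop :=
  exists r, dist_le v0 w r.

(* exponential growth of the component containing v0 (balls counted in the
   component, which is the same as in Gamma_m(G)) *)
Definition exp_growth (m : nat) (v0 : tup m) : Prop :=
  exists v, component v0 v /\ exists alpha : R, Rlt 1 alpha /\
    exists r0 : nat, forall r : nat, r0 <= r ->
      exists l : seq (tup m), List.NoDup l /\
        (forall w, List.In w l -> dist_le v w r) /\
        (Rle (pow alpha r) (INR (size l))).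

Definition cube_prod (k : nat) (g : tup k) (e : {ffun 'I_k -> bool}) : G :=
  foldr (fun j acc => mul (if e j then g j else one G) acc) (one G) (enum 'I_k).

(* cubic: the 2^k products are pairwise distinct, i.e. the set of products
   has exactly 2^k elements *)
Definition cubic (k : nat) (g : tup k) : Prop := injective (cube_prod g).

End GroupDefs.

Definition log_dense (k : nat -> nat) : Prop :=
  (forall i, 1 <= i -> 0 < k i) /\
  (forall i, 1 <= i -> k i < k i.+1) /\
  exists beta : R, forall i, 1 <= i -> Rle (INR (k i.+1)) (Rmult beta (INR (k i))).

From Stdlib Require Import Reals List FinFun FunctionalExtensionality Classical Lra.
From mathcomp Require Import all_boot zify.
(* Imported last, so that [mul], [one] and [mulg1] refer to the group record. *)

Set Implicit Arguments.
Unset Strict Implicit.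
Unset Printing Implicit Defensive.

(* Put x in an extra coordinate n of every vertex of a path S = S_0, S_1, ...
   of Gamma_n(G) and pad with 1: this lifts the path to Gamma_m(G), m > n.
   Walking along the lifted path and, on reaching S_j, replacing x by x g_j
   (one more edge, as g_j is an entry of S_j) reaches, within
   (path length) + k steps, a vertex whose extra coordinate is any of the
   2^k cube products g_1^{e_1} ... g_k^{e_k}; by cubicity these vertices are
   distinct. Since k_i is comparable to the radius and k_{i+1} <= beta k_i,
   every large ball contains about 2^{r / ((alpha + 1) beta)} vertices. *)

Section Distance.
Variables (G : group) (n : nat).
Implicit Types (u v w : tup G n) (l : seq (tup G n)).

Lemma adj_chain_cat u l1 l2 :
  adj_chain u l1 -> adj_chain (last u l1) l2 -> adj_chain u (l1 ++ l2).
Proof. by elim: l1 u => [|w l1 IH] u //= [uw wl1] /(IH w wl1). Qed.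

Lemma dist_le_refl u : generating u -> dist_le u u 0.
Proof. by exists [::]. Qed.

Lemma dist_le_adj u w : generating u -> generating w -> pr_adj u w -> dist_le u w 1.
Proof.
move=> gu gw uw; exists [:: w]; split=> //; split=> //.
by split=> //; split=> [x [<-|]|].
Qed.

Lemma dist_le_trans u v w r1 r2 :
  dist_le u v r1 -> dist_le v w r2 -> dist_le u w (r1 + r2).
Proof.
move=> [l1 [sz1 [[gu [gl1 c1]] <-]]] [l2 [sz2 [[_ [gl2 c2]] <-]]].
exists (l1 ++ l2); rewrite size_cat last_cat; split; first lia.
do !split=> //; last exact: adj_chain_cat.
by move=> x /(in_app_or l1 l2) [/gl1|/gl2].
Qed.

Lemma dist_le_leq u w r r' : dist_le u w r -> r <= r' -> dist_le u w r'.
Proof. by move=> [l [sz pl]] le_rr'; exists l; split=> //; lia. Qed.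

Lemma pr_path_nth_generating S l a : pr_path S l -> generating (nth S (S :: l) a).
Proof.
move=> [gS [gl _]]; elim: l S gS gl a => [|w l IH] v gv gl [|a] //=; first by rewrite nth_nil.
have [lt_a|le_a] := ltnP a (size (w :: l)); last by rewrite nth_default.
rewrite (set_nth_default w) //; apply: IH => [|x hx]; apply: gl; [left | right] => //.
Qed.

Lemma adj_chain_nth v l a :
  adj_chain v l -> a < size l -> pr_adj (nth v (v :: l) a) (nth v (v :: l) a.+1).
Proof.
elim: l v a => [|w l IH] v [|a] //= [vw wl] lt_al //.
by rewrite !(set_nth_default w v) //; [exact: IH | exact: ltnW].
Qed.

End Distance.

Section Extension.
Variables (G : group) (n m : nat).
Hypothesis lt_nm : n < m.
Implicit Types (x y : G) (T : tup G n).

Definition extend x T : tup G m :=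
  fun c => match @insub nat (fun i => i < n) _ (val c) with
           | Some c' => T c'
           | None => if val c == n then x else one G
           end.

Definition slot : 'I_m := Ordinal lt_nm.

Lemma extend_lt x T (c : 'I_m) (u : 'I_n) : val c = val u -> extend x T c = T u.
Proof.
rewrite /extend => e; case: insubP => [u' _ e'|]; last by rewrite e ltn_ord.
by congr T; apply: val_inj; rewrite e' e.
Qed.

Arguments extend_lt {x T c} u _.

Lemma extend_widen x T (u : 'I_n) : extend x T (widen_ord (ltnW lt_nm) u) = T u.
Proof. exact: extend_lt. Qed.

Lemma extend_ge x T (c : 'I_m) :
  n <= val c -> extend x T c = if val c == n then x else one G.
Proof. by rewrite /extend => ?; case: insubP => // u' ? ?; lia. Qed.

Lemma extend_slot x T : extend x T slot = x.
Proof. by rewrite extend_ge //= eqxx. Qed.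

Lemma pad_extend S : @pad G n m S = extend (one G) S.
Proof.
apply: functional_extensionality => c; rewrite /pad /extend.
by case: insub => //; case: (_ == _).
Qed.

Lemma extend_generating x T : generating T -> generating (extend x T).
Proof.
by move=> gT H sH Hext; apply: gT => // c; rewrite -(extend_widen x T c).
Qed.

Lemma extend_update x T (j : 'I_n) (v : G) :
  extend x (fun c => if c == j then v else T c) =
  (fun c => if c == widen_ord (ltnW lt_nm) j then v else extend x T c).
Proof.
apply: functional_extensionality => c; case: (ltnP (val c) n) => hc.
  by rewrite !(extend_lt (Ordinal hc)).
rewrite !extend_ge //; case: (c =P widen_ord _ j) => // e.
by move: hc; rewrite e /= leqNgt ltn_ord.
Qed.

Lemma extend_update_slot x y T :
  extend y T = (fun c => if c == slot then y else extend x T c).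
Proof.
apply: functional_extensionality => c; case: (ltnP (val c) n) => hc.
  have /negbTE-> : c != slot by apply: contraTneq hc => ->; rewrite ltnn.
  by rewrite !(extend_lt (Ordinal hc)).
rewrite !extend_ge //; case: (c =P slot) => [-> | ne]; first by rewrite /= eqxx.
by case: eqP => // e; case: ne; exact: val_inj.
Qed.

Lemma extend_adj x T T' : pr_adj T T' -> pr_adj (extend x T) (extend x T').
Proof.
move=> [i [j [ne_ij [h [hi hT']]]]].
exists (widen_ord (ltnW lt_nm) i), (widen_ord (ltnW lt_nm) j); split.
  by move=> /(congr1 val) /= /val_inj.
exists h; rewrite extend_widen; split=> //.
by case: hT' => ->; [left|right]; rewrite extend_update extend_widen.
Qed.

Lemma extend_adj_mulr x T (c : 'I_n) : pr_adj (extend x T) (extend (mul x (T c)) T).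
Proof.
exists (widen_ord (ltnW lt_nm) c), slot; split.
  by move=> /(congr1 val) /= e; move: (ltn_ord c); rewrite e ltnn.
exists (T c); split; first by left; rewrite extend_widen.
by left; rewrite (extend_update_slot x) extend_slot.
Qed.

Lemma extend_slot_inj x y T T' : extend x T = extend y T' -> x = y.
Proof. by move=> /(congr1 (fun f => f slot)); rewrite !extend_slot. Qed.

End Extension.
Arguments extend {G n} m x T.

Definition prodg (G : group) (I : Type) (h : I -> G) (s : seq I) : G :=
  foldr (fun i acc => mul (h i) acc) (one G) s.

Lemma path_leq_last a s : path leq a s -> a <= last a s.
Proof.
move=> /(order_path_min leq_trans) /allP a_le.
by have := mem_last a s; rewrite in_cons => /orP [/eqP->|/a_le].
Qed.

Lemma In_mem (T : eqType) (x : T) s : List.In x s -> x \in s.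
Proof. by elim: s => //= y s IH [->|/IH]; rewrite in_cons ?eqxx // => ->; rewrite orbT. Qed.

Lemma uniq_NoDup (T : eqType) (s : seq T) : uniq s -> List.NoDup s.
Proof.
elim: s => [|a s IH] /=; first by constructor.
by move=> /andP [a_notin /IH]; constructor=> // /In_mem; apply/negP.
Qed.

Section CubeBall.
Variables (G : group) (n m : nat).
Hypothesis lt_nm : n < m.
Variables (S : tup G n) (l : seq (tup G n)).
Hypothesis path_S : pr_path S l.

Let vertex a := nth S (S :: l) a.

Let extend_vertex_generating x a : generating (extend m x (vertex a)).
Proof. apply: (extend_generating lt_nm); exact: pr_path_nth_generating path_S. Qed.

Lemma extend_path_dist x a b :
  a <= b -> b <= size l ->
  dist_le (extend m x (vertex a)) (extend m x (vertex b)) (b - a).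
Proof.
move=> /subnKC <-; rewrite addKn; elim: (b - a) => [|d IH] le_l.
  by rewrite addn0; apply: dist_le_refl.
rewrite addnS -[d.+1]addn1; apply: dist_le_trans (IH _) _; first lia.
apply: dist_le_adj => //; apply/(extend_adj lt_nm)/adj_chain_nth; last lia.
by case: path_S => _ [].
Qed.

Lemma extend_prodg_dist (I : Type) (t : I -> nat) (h : I -> G) :
  (forall i, t i <= size l) ->
  (forall i, h i = one G \/ exists c, h i = vertex (t i) c) ->
  forall (s : seq I) a x, path leq a (map t s) ->
  dist_le (extend m x (vertex a))
          (extend m (mul x (prodg h s)) (vertex (last a (map t s))))
          (last a (map t s) - a + size s).
Proof.
move=> t_le h_entry; elim=> [|i s IH] a x /=.
  by rewrite mulg1 subnn => _; apply: dist_le_refl.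
move=> /andP [le_a_ti path_ti]; have le_ti_last := path_leq_last path_ti.
rewrite mulA.
apply: (dist_le_leq (r := t i - a + 1 + (last (t i) (map t s) - t i + size s))); last lia.
apply: dist_le_trans (IH _ _ path_ti).
apply: dist_le_trans (extend_path_dist x le_a_ti (t_le i)) _.
case: (h_entry i) => [->|[c ->]].
  by rewrite mulg1; apply: dist_le_leq (dist_le_refl _) _.
exact: dist_le_adj (extend_adj_mulr lt_nm _ _ _).
Qed.

Lemma cube_ball k (t : 'I_k -> nat) (g : tup G k) :
  (forall j1 j2 : 'I_k, j1 <= j2 -> t j1 <= t j2) ->
  (forall j, t j <= size l) ->
  (forall j, exists c, g j = vertex (t j) c) ->
  cubic g ->
  exists vs : seq (tup G m), List.NoDup vs /\
    (forall w, List.In w vs -> dist_le (@pad G n m S) w (size l + k)) /\ size vs = 2 ^ k.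
Proof.
move=> t_mono t_le g_entry g_cubic.
set ts := map t (enum 'I_k).
have path_ts : path leq 0 ts.
  rewrite path_min_sorted; last by apply/allP.
  rewrite sorted_map; apply: (@sub_sorted _ (relpre val leq)) => [j1 j2 /t_mono //|].
  by rewrite -sorted_map val_enum_ord iota_sorted.
have last_le : last 0 ts <= size l.
  have := mem_last 0 ts; rewrite in_cons => /orP [/eqP->//|/mapP [j _ ->]]; exact: t_le.
pose V := vertex (last 0 ts).
exists (map (fun e => extend m (cube_prod g e) V) (enum {ffun 'I_k -> bool})).
split.
  apply: Injective_map_NoDup (uniq_NoDup (enum_uniq _)) => e1 e2.
  by move=> /(extend_slot_inj lt_nm) /g_cubic.
split; last by rewrite size_map -cardE card_ffun card_bool card_ord.
move=> w /in_map_iff [e [<- _]].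
pose h j := if e j then g j else one G.
have h_entry j : h j = one G \/ exists c, h j = vertex (t j) c.
  by rewrite /h; case: (e j); [right; exact: g_entry | left].
have := extend_prodg_dist t_le h_entry (one G) path_ts.
rewrite mul1g -pad_extend subn0 size_enum_ord => dist_e.
by apply: dist_le_leq dist_e _; rewrite leq_add2r.
Qed.

End CubeBall.

Local Open Scope R_scope.

Lemma nat_crossing (P : nat -> Prop) a d :
  P a -> ~ P (a + d)%N -> exists i, (a <= i)%N /\ P i /\ ~ P i.+1.
Proof.
move=> Pa; elim: d => [|d IH] not_P; first by rewrite addn0 in not_P.
case: (classic (P (a + d)%N)) => [P_ad|]; last exact: IH.
by exists (a + d)%N; rewrite -addnS; do !split=> //; lia.
Qed.

Lemma log_dense_ge k : log_dense k -> forall i, (1 <= i)%N -> (i <= k i)%N.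
Proof.
move=> [k_gt0 [k_incr _]]; elim=> [|[|i] IH] //= _; first exact: k_gt0.
by have := k_incr i.+1 isT; have := IH isT; lia.
Qed.

Lemma log_dense_bracket k C : log_dense k -> 1 <= C -> forall r : nat,
  C * INR (k 1%N) <= INR r ->
  exists i, (1 <= i)%N /\ C * INR (k i) <= INR r /\ INR r < C * INR (k i.+1).
Proof.
move=> k_ld C_ge1 r r_ge.
have r_lt : ~ C * INR (k (1 + r)%N) <= INR r.
  have := le_INR _ _ (elimT leP (@log_dense_ge k k_ld (1 + r)%N isT)).
  rewrite plus_INR /= => k_ge le_r; have := pos_INR r; nra.
have [i [i_ge1 [Pi not_Pi]]] := @nat_crossing (fun i => C * INR (k i) <= INR r) 1 r r_ge r_lt.
by exists i; do !split=> //; lra.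
Qed.

Lemma INR_expn a b : INR (a ^ b)%N = INR a ^ b.
Proof. by elim: b => [|b IH] //; rewrite expnS -multE mult_INR IH. Qed.

Lemma pow_Rpower_inv_le (c : R) (x r : nat) :
  0 < c -> INR r <= c * INR x -> Rpower 2 (/ c) ^ r <= 2 ^ x.
Proof.
move=> c_gt0 r_le.
rewrite -(Rpower_pow x 2); last lra.
rewrite -(Rpower_pow r (Rpower 2 _)); last exact: exp_pos.
rewrite Rpower_mult; apply: Rle_Rpower; first lra.
apply: (Rmult_le_reg_l c) => //.
by rewrite -Rmult_assoc Rinv_r ?Rmult_1_l; lra.
Qed.

Lemma exp_growth_of_cube_balls (G : group) (m : nat) (v0 : tup G m) k C :
  generating v0 -> log_dense k -> 1 <= C ->
  (forall i r, (1 <= i)%N -> C * INR (k i) <= INR r ->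
     exists vs : seq (tup G m), List.NoDup vs /\
       (forall w, List.In w vs -> dist_le v0 w r) /\ size vs = (2 ^ k i)%N) ->
  exp_growth v0.
Proof.
move=> g_v0 k_ld C_ge1 balls.
have [k_gt0 [k_incr [beta beta_ok]]] := k_ld.
have beta_gt0 : 0 < beta.
  have := lt_INR _ _ (elimT ltP (k_incr 1%N isT)).
  have := lt_0_INR _ (elimT ltP (k_gt0 1%N isT)).
  have := beta_ok 1%N isT; nra.
have Cb_gt0 : 0 < C * beta by nra.
exists v0; split; first by exists 0%N; exact: dist_le_refl.
exists (Rpower 2 (/ (C * beta))); split.
  by rewrite -{1}(Rpower_O 2); [apply: Rpower_lt; [lra | apply: Rinv_0_lt_compat] | lra].
have [r0 r0_gt] := INR_unbounded (C * INR (k 1%N)).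
exists r0 => r le_r0r.
have r_ge1 : C * INR (k 1%N) <= INR r by have := le_INR _ _ (elimT leP le_r0r); lra.
have [i [i_ge1 [r_ge r_lt]]] := log_dense_bracket k_ld C_ge1 r_ge1.
have [vs [nd [dist_vs sz]]] := balls i r i_ge1 r_ge.
exists vs; do !split=> //; rewrite sz INR_expn; apply: pow_Rpower_inv_le => //.
have := beta_ok i i_ge1; nra.
Qed.

Local Close Scope R_scope.

Theorem lemma3p10 (G : group) (n : nat) (S : tup G n) (alpha : R) (k : nat -> nat) :
  fin_generated G ->
  generating S ->
  Rlt 1 alpha ->
  log_dense k ->
  (forall i, 1 <= i ->
     exists (l : seq (tup G n)),
       pr_path S l /\ Rle (INR (size l)) (Rmult alpha (INR (k i))) /\
       exists (Sj : 'I_(k i) -> tup G n) (t : 'I_(k i) -> nat) (g : tup G (k i)),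
         (forall j1 j2 : 'I_(k i), j1 <= j2 -> t j1 <= t j2) /\
         (forall j, t j <= size l /\ nth S (S :: l) (t j) = Sj j) /\
         (forall j, exists c : 'I_n, g j = Sj j c) /\
         cubic g) ->
  forall m : nat, n.+1 <= m -> exp_growth (@pad G n m S).
Proof.
move=> _ g_S alpha_gt1 k_ld paths m lt_nm.
apply: (@exp_growth_of_cube_balls _ _ _ k (alpha + 1) _ k_ld); [|lra|].
  by rewrite pad_extend; exact: (extend_generating lt_nm).
move=> i r i_ge1 r_ge.
have [l [path_S [l_le [Sj [t [g [t_mono [t_ok [g_entry g_cubic]]]]]]]]] := paths i i_ge1.
have [|vs [nd [dist_vs sz]]] := cube_ball lt_nm path_S t_mono (fun j => (t_ok j).1) _ g_cubic.
  by move=> j; rewrite (t_ok j).2.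
exists vs; split=> //; split=> // w /dist_vs /dist_le_leq; apply.
by apply/leP/INR_le; rewrite plus_INR; lra.
Qed.
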